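(* Let $\kappa$ be an uncountable regular cardinal, let $\mathcal{I}$ be a $\kappa$-complete proper ideal on $\kappa$ containing every bounded subset of $\kappa$, and let $\nu\in\{2,\kappa\}$. For every function $\Phi\colon{}^{\kappa}\nu\to{}^{\kappa}\nu$ that is continuous with respect to $\tau_{\mathcal{I}}$ on both sides, there is a continuous $\varphi\colon\mathrm{Fn}_{\mathcal{I}}({}^{\kappa}\nu)\to\mathrm{Fn}_{\mathcal{I}}({}^{\kappa}\nu)$ with $\varphi^*=\Phi$.
   Context: ${}^{\kappa}\nu$ is the set of functions $\kappa\to\nu$, $\mathrm{Fn}_{\mathcal{I}}({}^{\kappa}\nu)$ the set of functions $f\colon D\to\nu$ with $D\in\mathcal{I}$, $\mathbf{N}_f=\{x:f\subseteq x\}$, and $\tau_{\mathcal{I}}$ the topology on ${}^{\kappa}\nu$ generated by the sets $\mathbf{N}_f$. A map $\varphi\colon\mathrm{Fn}_{\mathcal{I}}\to\mathrm{Fn}_{\mathcal{I}}$ is monotone if $f\subseteq g$ implies $\varphi(f)\subseteq\varphi(g)$; it is continuous if it is monotone and for all $x\in{}^{\kappa}\nu$ and $D\in\mathcal{I}$ there is $E\in\mathcal{I}$ with $D\subseteq\mathrm{dom}(\varphi(x\restriction E))$. For continuous $\varphi$, $\varphi^*(x)$ is the limit $\lim_{D\in\mathcal{I}}\varphi(x\restriction D)$ over the directed set $(\mathcal{I},\subseteq)$, i.e. the unique $z\in{}^{\kappa}\nu$ such that for every $D\in\mathcal{I}$ there is $E\in\mathcal{I}$ with $z\restriction D=\varphi(x\restriction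 E')\restriction D$ for all $E'\in\mathcal{I}$ with $E\subseteq E'$. *)

From Stdlib Require Import Classical ClassicalEpsilon.

Set Implicit Arguments.

Definition card_le (A B : Type) : Prop :=
  exists f : A -> B, forall a a', f a = f a' -> a = a'.
Definition card_lt (A B : Type) : Prop := card_le A B /\ ~ card_le B A.

Definition strict_well_order (K : Type) (lt : K -> K -> Prop) : Prop :=
  (forall x, ~ lt x x) /\
  (forall x y z, lt x y -> lt y z -> lt x z) /\
  (forall x y, lt x y \/ x = y \/ lt y x) /\
  well_founded lt.

(* K with lt is (the order type of) a cardinal: every proper initial segment
   has strictly smaller cardinality. *)
Definition is_cardinal (K : Type) (lt : K -> K -> Prop) : Prop :=
  strict_well_order lt /\ forall x : K, card_lt {y : K | lt y x} K.

Definition uncountable (K : Type) : Prop := ~ card_le K nat.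

Definition bounded (K : Type) (lt : K -> K -> Prop) (A : K -> Prop) : Prop :=
  exists b : K, forall y, A y -> lt y b.

Definition regular (K : Type) (lt : K -> K -> Prop) : Prop :=
  forall A : K -> Prop, card_lt {y : K | A y} K -> bounded lt A.

Definition uncountable_regular_cardinal (K : Type) (lt : K -> K -> Prop) : Prop :=
  is_cardinal lt /\ uncountable K /\ regular lt.

Definition subset_of (K : Type) (A B : K -> Prop) : Prop := forall x, A x -> B x.

Definition is_ideal (K : Type) (I : (K -> Prop) -> Prop) : Prop :=
  I (fun _ => False) /\
  (forall A B, I B -> subset_of A B -> I A) /\
  (forall A B, I A -> I B -> I (fun x => A x \/ B x)).

Definition kappa_complete (K : Type) (I : (K -> Prop) -> Prop) : Prop :=
  forall (J : Type) (F : J -> K -> Prop),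
    card_lt J K -> (forall j, I (F j)) -> I (fun x => exists j, F j x).

Definition proper_ideal (K : Type) (I : (K -> Prop) -> Prop) : Prop :=
  ~ I (fun _ => True).

Definition contains_bounded (K : Type) (lt : K -> K -> Prop)
  (I : (K -> Prop) -> Prop) : Prop :=
  forall A, bounded lt A -> I A.

(* A partial function K -> V is represented as K -> option V. *)
Definition dom (K V : Type) (f : K -> option V) : K -> Prop :=
  fun k => f k <> None.

Definition Fn (K V : Type) (I : (K -> Prop) -> Prop) (f : K -> option V) : Prop :=
  I (dom f).

Definition pf_sub (K V : Type) (f g : K -> option V) : Prop :=
  forall k v, f k = Some v -> g k = Some v.

Definition pf_sub_total (K V : Type) (f : K -> option V) (x : K -> V) : Prop :=
  forall k v, f k = Some v -> x k = v.

Definition Nbhd (K V : Type) (f : K -> option V) : (K -> V) -> Prop :=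
  fun x => pf_sub_total f x.

Definition restr (K V : Type) (x : K -> V) (E : K -> Prop) : K -> option V :=
  fun k => if excluded_middle_informative (E k) then Some (x k) else None.

Definition generated_open (X : Type) (B : (X -> Prop) -> Prop) (U : X -> Prop) : Prop :=
  forall O : (X -> Prop) -> Prop,
    (forall b, B b -> O b) ->
    O (fun _ => True) ->
    (forall F : (X -> Prop) -> Prop, (forall A, F A -> O A) ->
        O (fun x => exists A, F A /\ A x)) ->
    (forall A1 A2, O A1 -> O A2 -> O (fun x => A1 x /\ A2 x)) ->
    O U.

Definition tauI_basic (K V : Type) (I : (K -> Prop) -> Prop) (U : (K -> V) -> Prop) : Prop :=
  exists f : K -> option V, Fn I f /\ forall x, U x <-> Nbhd f x.

Definition tauI_open (K V : Type) (I : (K -> Prop) -> Prop) (U : (K -> V) -> Prop) : Prop :=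
  generated_open (tauI_basic I) U.

Definition tauI_continuous (K V : Type) (I : (K -> Prop) -> Prop)
  (Phi : (K -> V) -> (K -> V)) : Prop :=
  forall U, tauI_open I U -> tauI_open I (fun x => U (Phi x)).

(* phi is given on all partial functions; only its behaviour on Fn_I matters *)
Definition maps_Fn (K V : Type) (I : (K -> Prop) -> Prop)
  (phi : (K -> option V) -> (K -> option V)) : Prop :=
  forall f, Fn I f -> Fn I (phi f).

Definition monotone_Fn (K V : Type) (I : (K -> Prop) -> Prop)
  (phi : (K -> option V) -> (K -> option V)) : Prop :=
  forall f g, Fn I f -> Fn I g -> pf_sub f g -> pf_sub (phi f) (phi g).

Definition continuous_Fn (K V : Type) (I : (K -> Prop) -> Prop)
  (phi : (K -> option V) -> (K -> option V)) : Prop :=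
  monotone_Fn I phi /\
  forall (x : K -> V) (D : K -> Prop), I D ->
    exists E, I E /\ subset_of D (dom (phi (restr x E))).

(* z = lim_{D in I} phi (x|D) *)
Definition is_phi_limit (K V : Type) (I : (K -> Prop) -> Prop)
  (phi : (K -> option V) -> (K -> option V)) (x z : K -> V) : Prop :=
  forall D, I D -> exists E, I E /\
    forall E', I E' -> subset_of E E' ->
      forall k, D k -> phi (restr x E') k = Some (z k).

Definition phi_star_eq (K V : Type) (I : (K -> Prop) -> Prop)
  (phi : (K -> option V) -> (K -> option V)) (Phi : (K -> V) -> (K -> V)) : Prop :=
  forall x, is_phi_limit I phi x (Phi x).

Definition conclusion (K V : Type) (I : (K -> Prop) -> Prop) : Prop :=
  forall Phi : (K -> V) -> (K -> V), tauI_continuous I Phi ->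
    exists phi : (K -> option V) -> (K -> option V),
      maps_Fn I phi /\ continuous_Fn I phi /\ phi_star_eq I phi Phi.

(* Let φ(f)(α) be the common value of Φ(y)(α) for y ∈ N_f, whenever α ∈ dom f and
   Φ(·)(α) is constant on N_f. Then φ is monotone, since N_g ⊆ N_f for f ⊆ g, and
   dom φ(f) ⊆ dom f keeps φ(f) in Fn_I. Given x and D ∈ I, continuity of Φ at x
   yields a basic neighbourhood N_h of x with Φ[N_h] ⊆ N_{Φ(x)|D}; for
   E = dom h ∪ D and every E' ⊇ E in I, Φ(·)(α) is then constant on N_{x|E'} for
   α ∈ D, that is φ(x|E') ⊇ Φ(x)|D. *)
From Stdlib Require Import Classical ClassicalEpsilon.

Set Implicit Arguments.
Unset Strict Implicit.

Section Ideal.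
Variables (K : Type) (I : (K -> Prop) -> Prop).
Hypothesis hI : is_ideal I.

Lemma ideal_empty : I (fun _ => False).
Proof. apply hI. Qed.

Lemma ideal_subset A B : I B -> subset_of A B -> I A.
Proof. destruct hI as [_ [H _]]. eauto. Qed.

Lemma ideal_union A B : I A -> I B -> I (fun k => A k \/ B k).
Proof. destruct hI as [_ [_ H]]. eauto. Qed.

End Ideal.

Section Restriction.
Variables (K V : Type).

Lemma restr_Some (x : K -> V) E k v : restr x E k = Some v -> E k /\ x k = v.
Proof.
  unfold restr. destruct (excluded_middle_informative (E k)); intro H.
  - injection H. auto.
  - discriminate.
Qed.

Lemma restr_in (x : K -> V) (E : K -> Prop) k : E k -> restr x E k = Some (x k).
Proof. unfold restr. destruct (excluded_middle_informative (E k)); tauto. Qed.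

Lemma dom_restr (x : K -> V) E : subset_of (dom (restr x E)) E.
Proof.
  intros k Hk. unfold dom in Hk.
  destruct (restr x E k) eqn:Hxk; [| congruence].
  now apply restr_Some in Hxk.
Qed.

Lemma Nbhd_restr (x : K -> V) E : Nbhd (restr x E) x.
Proof. intros k v H. now apply restr_Some in H. Qed.

Lemma Nbhd_restr_sub (h : K -> option V) x E y :
  Nbhd h x -> Nbhd (restr x E) y -> subset_of (dom h) E -> Nbhd h y.
Proof.
  intros Hx Hy HhE k v Hk.
  rewrite <- (Hx k v Hk). apply Hy, restr_in, HhE.
  unfold dom. congruence.
Qed.

Lemma Nbhd_inhabited (g : K -> option V) (d : V) : exists y, Nbhd g y.
Proof.
  exists (fun k => match g k with Some v => v | None => d end).
  intros k v H. now rewrite H.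
Qed.

End Restriction.

Section Topology.
Variables (K V : Type) (I : (K -> Prop) -> Prop).
Hypothesis hI : is_ideal I.

Lemma Fn_restr (x : K -> V) E : I E -> Fn I (restr x E).
Proof. intro HE. exact (ideal_subset hI HE (dom_restr (x := x) (E := E))). Qed.

Lemma tauI_open_Nbhd (f : K -> option V) : Fn I f -> tauI_open I (Nbhd f).
Proof. intros Hf O HB _ _ _. apply HB. exists f. split; [exact Hf | tauto]. Qed.

Lemma tauI_open_basic_nbhd (U : (K -> V) -> Prop) :
  tauI_open I U -> forall x, U x ->
  exists h, Fn I h /\ Nbhd h x /\ forall y, Nbhd h y -> U y.
Proof.
  intro HU. apply HU.
  - intros b [f [Hf Hb]] x Hx. exists f.
    split; [exact Hf |]. split; [now apply Hb | intros y Hy; now apply Hb].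
  - intros x _. exists (fun _ => None). split; [| split].
    + apply (ideal_subset hI (ideal_empty hI)). intros k Hk. now apply Hk.
    + intros k v H. discriminate.
    + trivial.
  - intros F HF x [A [HA Ax]].
    destruct (HF A HA x Ax) as [h [Hh [Hx HhU]]].
    exists h. repeat split; auto. intros y Hy. exists A. auto.
  - intros A1 A2 H1 H2 x [x1 x2].
    destruct (H1 x x1) as [h1 [F1 [N1 U1]]].
    destruct (H2 x x2) as [h2 [F2 [N2 U2]]].
    exists (restr x (fun k => dom h1 k \/ dom h2 k)).
    split; [now apply Fn_restr, ideal_union |].
    split; [apply Nbhd_restr |].
    intros y Hy. split.
    + apply U1, (Nbhd_restr_sub N1 Hy). intros k. now left.
    + apply U2, (Nbhd_restr_sub N2 Hy). intros k. now right.
Qed.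

Variable Phi : (K -> V) -> (K -> V).
Hypothesis HPhi : tauI_continuous I Phi.

Lemma tauI_continuous_restr (x : K -> V) D : I D ->
  exists E, I E /\ subset_of D E /\
  forall E' y, subset_of E E' -> Nbhd (restr x E') y ->
  forall k, D k -> Phi y k = Phi x k.
Proof.
  intro HD.
  assert (HU : tauI_open I (fun y => Nbhd (restr (Phi x) D) (Phi y)))
    by exact (HPhi (tauI_open_Nbhd (Fn_restr (Phi x) HD))).
  destruct (tauI_open_basic_nbhd HU (x := x) (Nbhd_restr (x := Phi x) (E := D)))
    as [h [Fh [Nh HhU]]].
  exists (fun k => dom h k \/ D k).
  split; [now apply ideal_union |]. split; [intros k; now right |].
  intros E' y HE' Hy k Hk.
  apply (HhU y); [| now apply restr_in].
  apply (Nbhd_restr_sub Nh Hy). intros k' Hk'. apply HE'. now left.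
Qed.

End Topology.

Section Code.
Variables (K V : Type) (I : (K -> Prop) -> Prop).
Hypothesis hI : is_ideal I.
Variable Phi : (K -> V) -> (K -> V).

Definition constant_on_Nbhd (f : K -> option V) (k : K) : Prop :=
  exists v, forall y, Nbhd f y -> Phi y k = v.

Definition code (f : K -> option V) (k : K) : option V :=
  match f k with
  | None => None
  | Some _ =>
      match excluded_middle_informative (constant_on_Nbhd f k) with
      | left H => Some (proj1_sig (constructive_indefinite_description _ H))
      | right _ => None
      end
  end.

Lemma code_Some f k v : code f k = Some v ->
  f k <> None /\ forall y, Nbhd f y -> Phi y k = v.
Proof.
  unfold code. destruct (f k) eqn:Hfk; [| discriminate].
  destruct (excluded_middle_informative (constant_on_Nbhd f k)) as [H | H];
    [| discriminate].
  destruct (constructive_indefinite_description _ H) as [w Hw]. simpl.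
  intro Hw'. injection Hw' as <-. split; [congruence | exact Hw].
Qed.

Lemma code_intro f k v : f k <> None -> (forall y, Nbhd f y -> Phi y k = v) ->
  (exists y, Nbhd f y) -> code f k = Some v.
Proof.
  intros Hfk Hv [y0 Hy0]. unfold code. destruct (f k); [| congruence].
  destruct (excluded_middle_informative (constant_on_Nbhd f k)) as [H | H].
  - destruct (constructive_indefinite_description _ H) as [w Hw]. simpl.
    now rewrite <- (Hw y0 Hy0), (Hv y0 Hy0).
  - exfalso. apply H. exists v. exact Hv.
Qed.

Lemma dom_code f : subset_of (dom (code f)) (dom f).
Proof.
  intros k Hk. unfold dom in *.
  destruct (code f k) eqn:Hck; [| congruence].
  now apply code_Some in Hck.
Qed.

Lemma maps_Fn_code : maps_Fn I code.
Proof. intros f Hf. exact (ideal_subset hI Hf (dom_code (f := f))). Qed.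

Lemma monotone_Fn_code : monotone_Fn I code.
Proof.
  intros f g _ _ Hfg k v Hv. apply code_Some in Hv as [Hfk Hconst].
  apply code_intro.
  - destruct (f k) eqn:Hf; [| congruence]. rewrite (Hfg _ _ Hf). discriminate.
  - intros y Hy. apply Hconst. intros k' v' H'. auto.
  - apply Nbhd_inhabited, v.
Qed.

Hypothesis HPhi : tauI_continuous I Phi.

Lemma code_restr_eventually (x : K -> V) D : I D ->
  exists E, I E /\ subset_of D E /\
  forall E', subset_of E E' -> forall k, D k -> code (restr x E') k = Some (Phi x k).
Proof.
  intro HD. destruct (tauI_continuous_restr hI HPhi x HD) as [E [HE [HDE HEPhi]]].
  exists E. split; [exact HE |]. split; [exact HDE |].
  intros E' HE' k Hk. apply code_intro.
  - rewrite restr_in; [discriminate | auto].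
  - intros y Hy. exact (HEPhi E' y HE' Hy k Hk).
  - exists x. apply Nbhd_restr.
Qed.

Lemma continuous_Fn_code : continuous_Fn I code.
Proof.
  split; [exact monotone_Fn_code |].
  intros x D HD. destruct (code_restr_eventually x HD) as [E [HE [_ Hcode]]].
  exists E. split; [exact HE |].
  intros k Hk. unfold dom.
  rewrite (Hcode E); [discriminate | intros k'; auto | exact Hk].
Qed.

Lemma phi_star_eq_code : phi_star_eq I code Phi.
Proof.
  intros x D HD. destruct (code_restr_eventually x HD) as [E [HE [_ Hcode]]].
  exists E. split; [exact HE |]. intros E' _ HEE'. exact (Hcode E' HEE').
Qed.

End Code.

Lemma conclusion_of_ideal (K V : Type) (I : (K -> Prop) -> Prop) :
  is_ideal I -> conclusion V I.
Proof.
  intros hI Phi HPhi. exists (code Phi).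
  split; [| split].
  - exact (maps_Fn_code hI Phi).
  - exact (continuous_Fn_code hI HPhi).
  - exact (phi_star_eq_code hI HPhi).
Qed.

Theorem proposition3p3 (K : Type) (lt : K -> K -> Prop)
  (I : (K -> Prop) -> Prop) :
  uncountable_regular_cardinal lt ->
  is_ideal I -> kappa_complete I -> proper_ideal I -> contains_bounded lt I ->
  (* nu = 2 *) conclusion bool I /\ (* nu = kappa *) conclusion K I.
Proof.
  intros _ hI _ _ _. split; now apply conclusion_of_ideal.
Qed.
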